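(* Let $\{\varphi_n\},\{\psi_n\}$ be biorthogonal sequences in a Hilbert space $\mathcal H$ such that $D(\varphi)$ and $D(\psi)$ are dense in $\mathcal H$. Then: (1) $(\{\varphi_n\},\{\psi_n\})$ is a $(D(\varphi),\mathcal E)$-quasi basis for some dense subspace $\mathcal E$ with $D_\varphi\subseteq\mathcal E\subseteq D(\psi)$ if and only if $D_\varphi$ is dense in $\mathcal H$. In that case $(\{\varphi_n\},\{\psi_n\})$ is a $(D(\varphi),D_\varphi)$-quasi basis. (2) $(\{\varphi_n\},\{\psi_n\})$ is a $(\mathcal D,D(\psi))$-quasi basis for some dense subspace $\mathcal D$ with $D_\psi\subseteq\mathcal D\subseteq D(\varphi)$ if and only if $D_\psi$ is dense in $\mathcal H$. In that case $(\{\varphi_n\},\{\psi_n\})$ is a $(D_\psi,D(\psi))$-quasi basis.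
   Context: Inner product linear in the first argument. Biorthogonal: $\langle\varphi_n,\psi_m\rangle=\delta_{nm}$. $D_\varphi,D_\psi$ are the linear spans; $D(\varphi)=\{x:\sum_n|\langle x,\varphi_n\rangle|^2<\infty\}$, similarly $D(\psi)$. For dense subspaces $\mathcal D,\mathcal E$ with $D_\psi\subseteq\mathcal D\subseteq D(\varphi)$, $D_\varphi\subseteq\mathcal E\subseteq D(\psi)$, the pair is a $(\mathcal D,\mathcal E)$-quasi basis if $\sum_k\langle x,\varphi_k\rangle\langle\psi_k,y\rangle=\langle x,y\rangle$ for all $x\in\mathcal D$, $y\in\mathcal E$. *)

From mathcomp Require Import all_boot all_algebra.
From mathcomp Require Import all_classical all_reals all_analysis.
From mathcomp Require Import complex.
Import numFieldTopology.Exports numFieldNormedType.Exports.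
Import GRing.Theory Num.Theory.
Set Implicit Arguments. Unset Strict Implicit. Unset Printing Implicit Defensive.
Local Open Scope ring_scope.
Local Open Scope classical_set_scope.

Section Defs.
Variables (R : realType) (H : completeNormedModType R[i]).

(* Together with completeness of H this makes H a Hilbert space. *)
Record is_inner_product (ip : H -> H -> R[i]) : Prop := {
  ip_linear1 : forall (a : R[i]) (x y z : H), ip (a *: x + y) z = a * ip x z + ip y z;
  ip_conj : forall x y : H, ip y x = (ip x y)^*;
  ip_norm : forall x : H, ip x x = `|x| ^+ 2 }.

Variable ip : H -> H -> R[i].

Definition biorthogonal (phi psi : nat -> H) : Prop :=
  forall n m : nat, ip (phi n) (psi m) = (n == m)%:R.

Definition is_subspace (E : set H) : Prop :=
  E 0 /\ forall (a : R[i]) (x y : H), E x -> E y -> E (a *: x + y).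

Definition lin_span (phi : nat -> H) : set H :=
  [set x | exists (n : nat) (c : nat -> R[i]), x = \sum_(k < n) c k *: phi k].

Definition Dom (phi : nat -> H) : set H :=
  [set x | cvg (series (fun n => `|ip x (phi n)| ^+ 2 : R[i]^o) @ \oo)].

Definition quasi_basis (phi psi : nat -> H) (D E : set H) : Prop :=
  [/\ is_subspace D, dense D, lin_span psi `<=` D & D `<=` Dom phi] /\
  [/\ is_subspace E, dense E, lin_span phi `<=` E & E `<=` Dom psi] /\
      (forall x y, D x -> E y ->
        series (fun k => ip x (phi k) * ip (psi k) y : R[i]^o) @ \oo --> (ip x y : R[i]^o)).
End Defs.

(* If the pair is a (D(phi), E)-quasi basis and z is orthogonal to every
   phi_n, then z lies in D(phi) and the expansion gives <z, y> = 0 for every y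
   in the dense set E, so z = 0.  In a Hilbert space a subspace with trivial
   orthogonal complement is dense (projection theorem), hence D_phi is dense.
   Conversely, for y in D_phi the expansion of <x, y> is a finite sum, correct
   by biorthogonality, so (D(phi), D_phi) is a quasi basis once D_phi is dense.
   Conjugating the expansion exchanges the roles of {phi_n} and {psi_n}, which
   turns (1) for the pair ({psi_n}, {phi_n}) into (2). *)

From mathcomp Require Import all_boot all_algebra.
From mathcomp Require Import all_classical all_reals all_analysis.
From mathcomp Require Import complex.
From mathcomp Require Import ring lra.
Import numFieldTopology.Exports numFieldNormedType.Exports.
Import order.Order.TTheory GRing.Theory Num.Theory.
Set Implicit Arguments. Unset Strict Implicit. Unset Printing Implicit Defensive.
Local Open Scope complex_scope.
Local Open Scope ring_scope.
Local Open Scope classical_set_scope.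

Section RealNorm.
Variables (R : realType) (V : normedModType R[i]).

Definition rnorm (v : V) : R := complex.Re `|v|.

Lemma normr_rnorm v : `|v| = (rnorm v)%:C.
Proof. by rewrite /rnorm RRe_real // normr_real. Qed.

Lemma rnorm_ge0 v : 0 <= rnorm v.
Proof. by rewrite -ler0c -normr_rnorm. Qed.

Lemma rnorm_eq0 v : rnorm v = 0 -> v = 0.
Proof. by move=> h; apply/normr0_eq0; rewrite normr_rnorm h. Qed.

Lemma rnormD v w : rnorm (v + w) <= rnorm v + rnorm w.
Proof. by rewrite -lecR rmorphD /= -!normr_rnorm ler_normD. Qed.

End RealNorm.

Lemma rnormZ (R : realType) (V : normedModType R[i]) (a : R[i]) (v : V) :
  rnorm (a *: v) = rnorm (a : R[i]^o) * rnorm v.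
Proof. by apply/eqP; rewrite -(inj_eq (@complexI _)) rmorphM /= -!normr_rnorm normrZ. Qed.

Section ComplexLimits.
Variable R : realType.

Lemma cvg_real_complex (f : nat -> R) (l : R) : f n @[n --> \oo] --> l ->
  ((f n)%:C : R[i]^o) @[n --> \oo] --> (l%:C : R[i]^o).
Proof.
move=> /cvgrPdist_lt fl; apply/cvgrPdist_lt => e e0.
have e_real : e = (complex.Re e)%:C by rewrite RRe_real // gtr0_real.
have Re_e0 : 0 < complex.Re e by rewrite -ltcR -e_real.
apply: filterS (fl _ Re_e0) => n ltn.
rewrite -rmorphB /= normr_rnorm /rnorm normc_def /= expr0n /= addr0 sqrtr_sqr.
by rewrite e_real ltcR.
Qed.

Lemma cvg_Re (u : nat -> R[i]^o) (l : R[i]^o) : u n @[n --> \oo] --> l ->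
  complex.Re (u n) @[n --> \oo] --> complex.Re l.
Proof.
move=> /cvgrPdist_lt ul; apply/cvgrPdist_lt => e e0.
have e0' : (0 : R[i]) < e%:C by rewrite ltcR.
apply: filterS (ul _ e0') => n ltn.
have -> : complex.Re l - complex.Re (u n) = complex.Re (l - u n) by case: (l); case: (u n).
by rewrite -ltcR; apply: le_lt_trans ltn; exact: normc_ge_Re.
Qed.

Lemma cvg_conj (u : nat -> R[i]^o) (l : R[i]^o) :
  u n @[n --> \oo] --> l -> ((u n)^* : R[i]^o) @[n --> \oo] --> (l^* : R[i]^o).
Proof.
move=> /cvgrPdist_lt ul; apply/cvgrPdist_lt => e e0.
by apply: filterS (ul _ e0) => n ltn; rewrite -rmorphB /= norm_conjC.
Qed.

End ComplexLimits.

Lemma cvg_rnorm_sub_sqr (R : realType) (V : normedModType R[i]) (m : nat -> V) p w :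
  m k @[k --> \oo] --> p -> rnorm (w - m k) ^+ 2 @[k --> \oo] --> rnorm (w - p) ^+ 2.
Proof.
move=> mp; have dist_cvg : rnorm (w - m k) @[k --> \oo] --> rnorm (w - p).
  by apply: cvg_Re; apply: cvg_norm; apply: cvgB => //; exact: cvg_cst.
by rewrite expr2; under eq_fun do rewrite expr2; exact: cvgM.
Qed.

Lemma cvg_series_eventually0 (K : numFieldType) (V : normedModType K) (u : nat -> V) n :
  (forall k, (n <= k)%N -> u k = 0) -> series u @ \oo --> series u n.
Proof.
move=> u0; apply: cvg_near_cst; exists n => // N /= nN.
rewrite !seriesEnat /= (big_cat_nat (leq0n n) nN) /=.
rewrite [X in _ + X]big_nat_cond [X in _ + X]big1 ?addr0 // => k /andP[/andP[nk _] _].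
exact: u0.
Qed.

Lemma sqr_le_2sqrD (F : realDomainType) (s u v : F) :
  0 <= s -> s <= u + v -> s ^+ 2 <= 2 * u ^+ 2 + 2 * v ^+ 2.
Proof. by move=> s_ge0 le_s; have := sqr_ge0 (u - v); nra. Qed.

Section Span.
Variables (R : realType) (H : completeNormedModType R[i]).

Lemma span_subspace (a : nat -> H) : is_subspace (lin_span a).
Proof.
split; first by exists 0%N, (fun=> 0); rewrite big_ord0.
move=> t _ _ [n [c ->]] [n' [c' ->]].
pose pad n (c : nat -> R[i]) k := if (k < n)%N then c k else 0.
have pad_sum n0 (c0 : nat -> R[i]) : (n0 <= maxn n n')%N ->
    \sum_(k < n0) c0 k *: a k = \sum_(k < maxn n n') pad n0 c0 k *: a k.
  move=> le_n0; rewrite (big_ord_widen _ (fun k => c0 k *: a k) le_n0) big_mkcond.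
  by apply: eq_bigr => k _; rewrite /pad; case: ifP; rewrite ?scale0r.
exists (maxn n n'), (fun k => t * pad n c k + pad n' c' k).
rewrite (pad_sum n c (leq_maxl _ _)) (pad_sum n' c' (leq_maxr _ _)).
by rewrite scaler_sumr -big_split; apply: eq_bigr => k _; rewrite scalerDl scalerA.
Qed.

Lemma mem_span (a : nat -> H) n : lin_span a (a n).
Proof.
exists n.+1, (fun k => (k == n)%:R).
rewrite big_ord_recr /= eqxx scale1r big1 ?add0r // => k _.
by rewrite (ltn_eqF (ltn_ord k)) scale0r.
Qed.

End Span.

Section InnerProduct.
Variables (R : realType) (H : completeNormedModType R[i]) (ip : H -> H -> R[i]).
Hypothesis hip : is_inner_product ip.

Lemma ipDl x y z : ip (x + y) z = ip x z + ip y z.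
Proof. by have := ip_linear1 hip 1 x y z; rewrite scale1r mul1r. Qed.

Lemma ip0l z : ip 0 z = 0.
Proof. by apply: (addrI (ip 0 z)); rewrite -ipDl !addr0. Qed.

Lemma ipZl a x z : ip (a *: x) z = a * ip x z.
Proof. by have := ip_linear1 hip a x 0 z; rewrite !addr0 ip0l addr0. Qed.

Lemma ipNl x z : ip (- x) z = - ip x z.
Proof. by rewrite -scaleN1r ipZl mulN1r. Qed.

Lemma ipBl x y z : ip (x - y) z = ip x z - ip y z.
Proof. by rewrite ipDl ipNl. Qed.

Lemma ipDr x y z : ip z (x + y) = ip z x + ip z y.
Proof. by rewrite (ip_conj hip) ipDl rmorphD /= -!(ip_conj hip). Qed.

Lemma ipZr a x z : ip z (a *: x) = a^* * ip z x.
Proof. by rewrite (ip_conj hip) ipZl rmorphM /= -!(ip_conj hip). Qed.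

Lemma ipBr x y z : ip z (x - y) = ip z x - ip z y.
Proof. by rewrite (ip_conj hip) ipBl rmorphB /= -!(ip_conj hip). Qed.

Lemma ip_suml n (c : nat -> R[i]) (f : nat -> H) z :
  ip (\sum_(k < n) c k *: f k) z = \sum_(k < n) c k * ip (f k) z.
Proof.
elim: n => [|n IH]; first by rewrite !big_ord0 ip0l.
by rewrite !big_ord_recr /= ipDl IH ipZl.
Qed.

Lemma ip_sumr n (c : nat -> R[i]) (f : nat -> H) z :
  ip z (\sum_(k < n) c k *: f k) = \sum_(k < n) (c k)^* * ip z (f k).
Proof.
elim: n => [|n IH]; first by rewrite !big_ord0 (ip_conj hip) ip0l conjC0.
by rewrite !big_ord_recr /= ipDr IH ipZr.
Qed.

Lemma ipxx v : ip v v = (rnorm v ^+ 2)%:C.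
Proof. by rewrite (ip_norm hip) normr_rnorm rmorphXn. Qed.

Lemma rnormB_sqr_orth (z y : H) : ip z y = 0 ->
  rnorm (z - y) ^+ 2 = rnorm z ^+ 2 + rnorm y ^+ 2.
Proof.
move=> zy; apply/eqP; rewrite -(inj_eq (@complexI _)) rmorphD /= -!ipxx.
by rewrite ipBl !ipBr (ip_conj hip z y) zy conjC0 !subr0 sub0r opprK.
Qed.

Lemma orth_dense_eq0 (E : set H) z : dense E -> (forall y, E y -> ip z y = 0) -> z = 0.
Proof.
move=> dE zE; apply: contrapT => z_neq0.
have z_gt0 : 0 < rnorm z.
  by rewrite lt_neqAle rnorm_ge0 andbT eq_sym; apply/eqP => /rnorm_eq0.
have [y [zy Ey]] : ball z `|z| `&` E !=set0.
  apply: dE; last exact: ball_open.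
  by exists z; apply: ballxx; rewrite normr_rnorm ltcR.
move: zy; rewrite -ball_normE /= !normr_rnorm ltcR => zy.
have := rnormB_sqr_orth (zE _ Ey); have := rnorm_ge0 y.
have := rnorm_ge0 (z - y); nra.
Qed.

Lemma rnormB_scale_sqr (z s : H) (e : R) :
  rnorm (z - (e%:C * ip z s) *: s) ^+ 2 =
  rnorm z ^+ 2 - 2 * e * rnorm (ip z s : R[i]^o) ^+ 2
  + e ^+ 2 * rnorm (ip z s : R[i]^o) ^+ 2 * rnorm s ^+ 2.
Proof.
have conj_e : (e%:C : R[i])^* = e%:C := conjc_real e.
apply/eqP; rewrite -(inj_eq (@complexI _)) /= -ipxx.
rewrite !(rmorphB, rmorphD, rmorphM) /= -!normr_rnorm -!expr2 -!(ip_norm hip).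
rewrite sqr_normc ?rmorph_nat ipBl !ipBr !ipZl !ipZr rmorphM /= conj_e.
by rewrite (ip_conj hip z s); apply/eqP; ring.
Qed.

(* Minimality at [t = e <z, s>], with [e = 1 / (|s|^2 + 1)], reads
   [0 <= - e (2 - e |s|^2) |<z, s>|^2], and [2 - e |s|^2 > 0]. *)
Lemma orth_of_min_rnorm (z s : H) :
  (forall t : R[i], rnorm z ^+ 2 <= rnorm (z - t *: s) ^+ 2) -> ip z s = 0.
Proof.
move=> zmin; pose e := (rnorm s ^+ 2 + 1)^-1.
have e_gt0 : 0 < e by rewrite invr_gt0 ltr_wpDl ?sqr_ge0.
have ee : e * (rnorm s ^+ 2 + 1) = 1 by rewrite mulVf // gt_eqF // ltr_wpDl ?sqr_ge0.
have := zmin (e%:C * ip z s); rewrite rnormB_scale_sqr.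
set a := rnorm (ip z s : R[i]^o) => le_z.
have := sqr_ge0 (rnorm s); have := mulr_ge0 (ltW e_gt0) (sqr_ge0 a) => ea_ge0 s2_ge0.
have /eqP : a ^+ 2 = 0 by nra.
by rewrite expf_eq0 /= => /eqP /(@rnorm_eq0 _ (R[i]^o)).
Qed.

Lemma apollonius (x a b : H) :
  rnorm (a - b) ^+ 2 + 4 * rnorm (x - 2^-1 *: (a + b)) ^+ 2 =
  2 * rnorm (x - a) ^+ 2 + 2 * rnorm (x - b) ^+ 2.
Proof.
have conj_half : (2^-1 : R[i])^* = 2^-1 by rewrite fmorphV /= (conjC_nat _ 2).
apply/eqP; rewrite -(inj_eq (@complexI _)) !rmorphD !rmorphM /= !rmorph_nat.
rewrite -!normr_rnorm -!expr2 -!(ip_norm hip).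
rewrite !ipBl !ipBr !ipZl !ipZr !ipDl !ipDr conj_half.
by apply/eqP; field.
Qed.

(* The projection theorem: a minimizing sequence for the distance from [x] to
   [V] is Cauchy by Apollonius' identity at midpoints, and [x] minus its limit
   is orthogonal to [V]. *)
Section Projection.
Variables (V : set H) (x : H).
Hypothesis V_subspace : is_subspace V.

Let d := inf [set rnorm (x - v) ^+ 2 | v in V].

Lemma inf_dist_le v : V v -> d <= rnorm (x - v) ^+ 2.
Proof.
move=> Vv; apply: ge_inf; last by exists v.
by exists 0 => _ [w _ <-]; exact: sqr_ge0.
Qed.

Lemma exists_minimizing_seq :
  exists m : nat -> H, forall k, V (m k) /\ rnorm (x - m k) ^+ 2 < d + harmonic k.
Proof.
suff /choice[m mP] : forall k, exists v, V v /\ rnorm (x - v) ^+ 2 < d + harmonic k.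
  by exists m.
move=> k.
have d_inf : has_inf [set rnorm (x - v) ^+ 2 | v in V].
  split; first by exists (rnorm (x - 0) ^+ 2), 0; first exact: V_subspace.1.
  by exists 0 => _ [w _ <-]; exact: sqr_ge0.
by have [_ [v Vv <-] lt] := inf_adherent (harmonic_gt0 k) d_inf; exists v.
Qed.

Variable m : nat -> H.
Hypothesis m_in_V : forall k, V (m k).
Hypothesis m_min : forall k, rnorm (x - m k) ^+ 2 < d + harmonic k.

Lemma minimizing_seq_dist j k : rnorm (m j - m k) ^+ 2 < 2 * harmonic j + 2 * harmonic k.
Proof.
have mid_in_V : V (2^-1 *: (m j + m k)).
  case: V_subspace => V0 Vlin.
  by rewrite scalerDr -[_ *: m k]addr0; apply: (Vlin) => //; apply: (Vlin).
have := inf_dist_le mid_in_V; have := apollonius x (m j) (m k).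
have := m_min j; have := m_min k; lra.
Qed.

Lemma minimizing_seq_cvg : cvgn m.
Proof.
apply: cauchy_cvg; apply: cauchy_exP => e e_gt0.
have e_real : e = (complex.Re e)%:C by rewrite RRe_real // gtr0_real.
have Re_e0 : 0 < complex.Re e by rewrite -ltcR -e_real.
have e4_gt0 : 0 < complex.Re e ^+ 2 / 4 by rewrite divr_gt0 // exprn_gt0.
have [N _ hN] := (cvgrPdist_lt _ _).1 (@cvg_harmonic R) _ e4_gt0.
have harmonic_small n : (N <= n)%N -> harmonic n < complex.Re e ^+ 2 / 4.
  by move=> /hN /=; rewrite sub0r normrN ger0_norm.
exists (m N), N => // n /= Nn.
rewrite -ball_normE /= normr_rnorm e_real ltcR.
have := minimizing_seq_dist N n; have := harmonic_small N (leqnn N).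
have := harmonic_small n Nn; have := rnorm_ge0 (m N - m n); nra.
Qed.

Lemma minimizing_seq_lim_orth (p s : H) :
  m k @[k --> \oo] --> p -> V s -> ip (x - p) s = 0.
Proof.
move=> m_lim Vs; apply: orth_of_min_rnorm => t.
have le_d : rnorm (x - p) ^+ 2 <= d.
  have dist_lim := cvg_rnorm_sub_sqr (w := x) m_lim.
  have d_lim : d + harmonic k @[k --> \oo] --> d.
    by rewrite -[X in _ --> X]addr0; apply: cvgD; [exact: cvg_cst | exact: cvg_harmonic].
  rewrite -(cvg_lim _ dist_lim) // -(cvg_lim _ d_lim) //.
  apply: ler_lim; [exact: cvgP dist_lim | exact: cvgP d_lim |].
  by apply: nearW => k; exact/ltW/m_min.
apply: (le_trans le_d).
have dist_lim := cvg_rnorm_sub_sqr (w := x - t *: s) m_lim.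
rewrite addrAC -(cvg_lim _ dist_lim) //; apply: limr_ge; first exact: cvgP dist_lim.
apply: nearW => k; rewrite -addrA -opprD.
by apply: inf_dist_le; apply: V_subspace.2.
Qed.

End Projection.

Lemma dense_of_orth_eq0 (V : set H) : is_subspace V ->
  (forall z, (forall v, V v -> ip z v = 0) -> z = 0) -> dense V.
Proof.
move=> V_sub orth_eq0 O [x Ox] O_open.
have [m mP] := exists_minimizing_seq x V_sub.
have m_in_V k : V (m k) := (mP k).1.
have /cvg_ex[p m_p] := minimizing_seq_cvg V_sub m_in_V (fun k => (mP k).2).
have x_p : x = p.
  apply/eqP; rewrite -subr_eq0; apply/eqP/orth_eq0 => s Vs.
  exact: (minimizing_seq_lim_orth V_sub m_in_V (fun k => (mP k).2) m_p).
rewrite -x_p in m_p.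
have [N _ mN] : \forall k \near \oo, O (m k).
  by apply: m_p; apply: open_nbhs_nbhs; split.
by exists (m N); split; [exact: mN N (leqnn N) | exact: m_in_V].
Qed.

Lemma biorthogonal_sym a b : biorthogonal ip a b -> biorthogonal ip b a.
Proof. by move=> ab n m; rewrite (ip_conj hip) ab conjC_nat eq_sym. Qed.

Lemma ip_sum_biorth a b n (c : nat -> R[i]) m : biorthogonal ip a b ->
  ip (\sum_(k < n) c k *: a k) (b m) = if (m < n)%N then c m else 0.
Proof.
move=> ab; rewrite ip_suml; under eq_bigr do rewrite ab mulr_natr mulrb.
by rewrite -big_mkcond big_ord1_eq.
Qed.

Lemma DomP (a : nat -> H) x :
  Dom ip a x <-> cvgn (series (fun n => rnorm (ip x (a n) : R[i]^o) ^+ 2)).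
Proof.
rewrite /Dom /=.
have -> : series (fun n => `|ip x (a n)| ^+ 2 : R[i]^o) =
    fun N => (series (fun n => rnorm (ip x (a n) : R[i]^o) ^+ 2) N)%:C.
  apply: funext => N; rewrite !seriesEnat /= rmorph_sum.
  by apply: eq_bigr => k _; rewrite rmorphXn /= -normr_rnorm.
split => /cvg_ex [l sl]; apply/cvg_ex.
  by exists (complex.Re l); exact: (cvg_Re sl).
by exists l%:C; exact: cvg_real_complex.
Qed.

Lemma Dom_orth (a : nat -> H) z : (forall k, ip z (a k) = 0) -> Dom ip a z.
Proof.
move=> za; apply/cvg_ex; exists 0; apply: cvg_near_cst; apply: nearW => N.
by rewrite seriesEnat /= big1 // => k _; rewrite za normr0 expr0n.
Qed.

Lemma span_Dom a b : biorthogonal ip a b -> lin_span a `<=` Dom ip b.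
Proof.
move=> ab _ [n [c ->]]; apply/cvg_ex; eexists; apply: (@cvg_series_eventually0 _ _ _ n).
by move=> k nk; rewrite ip_sum_biorth // ltnNge nk normr0 expr0n.
Qed.

Lemma Dom_subspace (a : nat -> H) : is_subspace (Dom ip a).
Proof.
split; first by apply: Dom_orth => k; rewrite ip0l.
move=> t x y /DomP x_Dom /DomP y_Dom; apply/DomP.
pose ax n := rnorm (ip x (a n) : R[i]^o); pose ay n := rnorm (ip y (a n) : R[i]^o).
pose bound := (2 * rnorm (t : R[i]^o) ^+ 2) *: (fun n => ax n ^+ 2) + 2 *: (fun n => ay n ^+ 2).
apply: (@series_le_cvg _ _ bound).
- by move=> n; exact: sqr_ge0.
- move=> n; rewrite /bound !fctE /GRing.scale /=.
  have := sqr_ge0 (rnorm (t : R[i]^o)); have := sqr_ge0 (ax n); have := sqr_ge0 (ay n); nra.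
- move=> n; rewrite /bound !fctE /GRing.scale /= (ip_linear1 hip) -mulrA -exprMn.
  apply: sqr_le_2sqrD; first exact: rnorm_ge0.
  by rewrite -(rnormZ t (ip x (a n) : R[i]^o)); exact: rnormD.
- by apply: is_cvg_seriesD; apply: is_cvg_seriesZ.
Qed.

Lemma quasi_basis_sym a b D E : quasi_basis ip a b D E -> quasi_basis ip b a E D.
Proof.
move=> [D_qb [E_qb expand]]; split=> //; split=> // x y Ex Dy.
rewrite (ip_conj hip) -[_^*]/((ip y x)^* : R[i]^o).
have -> : series (fun k => ip x (b k) * ip (a k) y : R[i]^o) =
    fun N => (series (fun k => ip y (a k) * ip (b k) x : R[i]^o) N)^*.
  apply: funext => N; rewrite !seriesEnat /= rmorph_sum; apply: eq_bigr => k _.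
  by rewrite rmorphM /= -!(ip_conj hip) mulrC.
exact/cvg_conj/expand.
Qed.

Lemma dense_span_quasi_basis a b E :
  quasi_basis ip a b (Dom ip a) E -> dense (lin_span a).
Proof.
move=> [_ [[_ E_dense _ _] expand]].
apply: (dense_of_orth_eq0 (span_subspace a)) => z z_orth.
apply: (orth_dense_eq0 E_dense) => y Ey.
have za k : ip z (a k) = 0 := z_orth _ (mem_span a k).
have := expand z y (Dom_orth za) Ey.
have -> : series (fun k => ip z (a k) * ip (b k) y : R[i]^o) = fun=> 0.
  by apply: funext => N; rewrite seriesEnat /= big1 // => k _; rewrite za mul0r.
by move/cvg_lim => <- //; rewrite lim_cst.
Qed.

Lemma quasi_basis_Dom_span a b : biorthogonal ip a b ->
  dense (Dom ip a) -> dense (lin_span a) -> quasi_basis ip a b (Dom ip a) (lin_span a).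
Proof.
move=> ab Dom_dense span_dense.
have ba := biorthogonal_sym ab.
split.
  by split; [exact: Dom_subspace | exact: Dom_dense | exact: span_Dom ba | ].
split.
  by split; [exact: span_subspace | exact: span_dense | | exact: span_Dom ab].
move=> x _ _ [n [c ->]].
have ip_b_span k : ip (b k) (\sum_(j < n) c j *: a j) = if (k < n)%N then (c k)^* else 0.
  by rewrite (ip_conj hip) ip_sum_biorth //; case: ifP; rewrite ?conjC0.
rewrite ip_sumr.
have -> : \sum_(k < n) (c k)^* * ip x (a k) =
    series (fun k => ip x (a k) * ip (b k) (\sum_(j < n) c j *: a j)) n.
  by rewrite seriesEnat /= big_mkord; apply: eq_bigr => k _; rewrite ip_b_span ltn_ord mulrC.
apply: cvg_series_eventually0 => k nk.
by rewrite ip_b_span ltnNge nk mulr0.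
Qed.

End InnerProduct.

Theorem proposition4p2 (R : realType) (H : completeNormedModType R[i])
  (ip : H -> H -> R[i]) (phi psi : nat -> H) :
  is_inner_product ip -> biorthogonal ip phi psi ->
  dense (Dom ip phi) -> dense (Dom ip psi) ->
  ((exists E : set H, quasi_basis ip phi psi (Dom ip phi) E) <-> dense (lin_span phi)) /\
  (dense (lin_span phi) -> quasi_basis ip phi psi (Dom ip phi) (lin_span phi)) /\
  ((exists D : set H, quasi_basis ip phi psi D (Dom ip psi)) <-> dense (lin_span psi)) /\
  (dense (lin_span psi) -> quasi_basis ip phi psi (lin_span psi) (Dom ip psi)).
Proof.
move=> hip phi_psi Dom_phi_dense Dom_psi_dense.
have qb_phi := quasi_basis_Dom_span hip phi_psi Dom_phi_dense.
have qb_psi (span_dense : dense (lin_span psi)) :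
    quasi_basis ip phi psi (lin_span psi) (Dom ip psi).
  apply: (quasi_basis_sym hip).
  exact: (quasi_basis_Dom_span hip (biorthogonal_sym hip phi_psi) Dom_psi_dense span_dense).
split; [|split; [exact: qb_phi | split; [|exact: qb_psi]]]; split.
- by move=> [E]; exact: dense_span_quasi_basis.
- by move=> span_dense; exists (lin_span phi); exact: qb_phi.
- by move=> [D /(quasi_basis_sym hip)]; exact: dense_span_quasi_basis.
- by move=> span_dense; exists (lin_span psi); exact: qb_psi.
Qed.
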